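(* Let $a_1,a_2>0$, let $\omega=\{\mathbf y=(y_1,y_2)\in\mathbb R^2:\ y_1^2/a_1^2+y_2^2/a_2^2<1\}$ be the open elliptical domain with boundary $\Gamma=\partial\omega$, set $s=a_2/a_1$, and define $$\theta(\mathbf y)=1-\frac{y_1^2}{a_1^2}-\frac{y_2^2}{a_2^2},\qquad \bar p(\mathbf y)=p_0\,\theta(\mathbf y)^2,\qquad \rho(\mathbf y)=\Bigl(\frac{s\,y_1^2}{a_1^2}+\frac{y_2^2}{s\,a_2^2}\Bigr)\theta(\mathbf y),$$ where $p_0>0$ is a constant. Let $m>0$, $h_1,h_2>0$, $E_1,E_2>0$ be constants, and let $\tilde H_1,\tilde H_2$ be continuously differentiable real functions on $\overline{\omega}$. Suppose $\tilde p\in C^2(\overline\omega)$ solves $$-m^{-1}\Delta_y\tilde p(\mathbf y)=\sum_{\alpha=1}^2\frac{3h_\alpha^2}{E_\alpha}\nabla_y\cdot\bigl(\tilde H_\alpha(\mathbf y)\nabla_y\bar p(\mathbf y)\bigr),\quad \mathbf y\in\omega,\qquad \tilde p(\mathbf y)=0,\quad \mathbf y\in\Gamma.$$ Then $$\iint_\omega\tilde p(\mathbf y)\,d\mathbf y=0\quad\text{if and only if}\quad \sum_{\alpha=1}^2\frac{h_\alpha^2}{E_\alpha}\iint_\omega\tilde H_\alpha(\mathbf y)\,\rho(\mathbf y)\,d\mathbf y=0.$$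
   Context: $\Delta_y=\partial^2/\partial y_1^2+\partial^2/\partial y_2^2$ is the Laplacian and $\nabla_y=(\partial/\partial y_1,\partial/\partial y_2)$ the gradient in the plane variables $\mathbf y=(y_1,y_2)$; the dot denotes the Euclidean scalar product. In the application, $\tilde p$ is the first-order variation of the contact pressure caused by small thickness variations $\tilde H_\alpha$ of two thin incompressible elastic layers (thicknesses $h_\alpha$, Young's moduli $E_\alpha$, $m=(E_1^{-1}h_1^3+E_2^{-1}h_2^3)^{-1}$), and $\bar p$ is the unperturbed pressure on the elliptical contact region $\omega$. *)

From Stdlib Require Import Reals.
From Coquelicot Require Import Coquelicot.
Open Scope R_scope.

Definition ellq (a1 a2 : R) (y : R * R) : R :=
  (fst y) ^ 2 / a1 ^ 2 + (snd y) ^ 2 / a2 ^ 2.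

Definition in_omega (a1 a2 : R) (y : R * R) : Prop := ellq a1 a2 y < 1.
Definition in_closure (a1 a2 : R) (y : R * R) : Prop := ellq a1 a2 y <= 1.
Definition in_Gamma (a1 a2 : R) (y : R * R) : Prop := ellq a1 a2 y = 1.

Definition theta (a1 a2 : R) (y : R * R) : R := 1 - ellq a1 a2 y.
Definition pbar (a1 a2 p0 : R) (y : R * R) : R := p0 * (theta a1 a2 y) ^ 2.
Definition rho (a1 a2 : R) (y : R * R) : R :=
  let s := a2 / a1 in
  (s * (fst y) ^ 2 / a1 ^ 2 + (snd y) ^ 2 / (s * a2 ^ 2)) * theta a1 a2 y.

Definition d1 (f : R * R -> R) (y : R * R) : R :=
  Derive (fun t => f (t, snd y)) (fst y).
Definition d2 (f : R * R -> R) (y : R * R) : R :=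
  Derive (fun t => f (fst y, t)) (snd y).

Definition lap (f : R * R -> R) (y : R * R) : R := d1 (d1 f) y + d2 (d2 f) y.
Definition div_H_grad (H g : R * R -> R) (y : R * R) : R :=
  d1 (fun z => H z * d1 g z) y + d2 (fun z => H z * d2 g z) y.

Definition cont_on (D : R * R -> Prop) (F : R * R -> R) : Prop :=
  forall z, D z -> filterlim F (within D (locally z)) (locally (F z)).

Definition partials_in_omega (a1 a2 : R) (f g1 g2 : R * R -> R) : Prop :=
  forall z, in_omega a1 a2 z ->
    is_derive (fun t => f (t, snd z)) (fst z) (g1 z) /\
    is_derive (fun t => f (fst z, t)) (snd z) (g2 z).

(* C^1(closure omega): f continuous on the closure, its partial derivatives
   exist in omega and extend continuously to the closure. *)
Definition C1_closure (a1 a2 : R) (f : R * R -> R) : Prop :=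
  cont_on (in_closure a1 a2) f /\
  exists g1 g2, partials_in_omega a1 a2 f g1 g2 /\
    cont_on (in_closure a1 a2) g1 /\ cont_on (in_closure a1 a2) g2.

(* C^2(closure omega): all partial derivatives up to order 2 exist in omega
   and extend continuously to the closure. *)
Definition C2_closure (a1 a2 : R) (f : R * R -> R) : Prop :=
  cont_on (in_closure a1 a2) f /\
  exists g1 g2, partials_in_omega a1 a2 f g1 g2 /\
    C1_closure a1 a2 g1 /\ C1_closure a1 a2 g2.

(* Double integral over the ellipse omega, as an iterated Riemann integral
   (for functions continuous on the closure this is the area integral). *)
Definition ell_bound (a1 a2 y1 : R) : R := a2 * sqrt (1 - y1 ^ 2 / a1 ^ 2).
Definition int_omega (a1 a2 : R) (f : R * R -> R) : R :=
  RInt (fun y1 => RInt (fun y2 => f (y1, y2))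
                       (- ell_bound a1 a2 y1) (ell_bound a1 a2 y1)) (- a1) a1.

(* Multiply the equation by theta, which vanishes on Gamma, and integrate over omega.
   Integrating by parts twice in each direction turns the Laplacian term into
   -2 (1/a1^2 + 1/a2^2) times the integral of p~, while a single integration by parts
   turns each divergence term into -8 p0 / (a1 a2) times the integral of H~_alpha rho,
   because grad theta . grad pbar = 8 p0 rho / (a1 a2).  Both constants are nonzero, so
   the two integrals vanish together.

   Every integration by parts reduces to: the integral over omega of a partial derivative
   of a function vanishing on Gamma is zero.  In the y2 direction this is the fundamental
   theorem of calculus on each slice; in the y1 direction it is a Leibniz rule for
   x |-> int_{-b(x)}^{b(x)} F(x,t) dt (b = ell_bound) whose boundary terms vanish with F.
   Since the data are only differentiable inside omega, functions continuous on the
   closure are extended to the plane by composing with the radial retraction onto the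
   closed ellipse. *)

From Pilot Require Import Defs.
From Stdlib Require Import Reals Lra Classical ClassicalEpsilon.
From Coquelicot Require Import Coquelicot.
Open Scope R_scope.
Set Bullet Behavior "Strict Subproofs".

(** * Continuity on the plane *)

(* Coquelicot states these for the generic [plus] and [mult], which [apply] does not
   unify with [Rplus] and [Rmult]. *)
Section RealContinuity.
Context {U : UniformSpace}.
Implicit Types f g : U -> R.

Lemma cont_plus f g z : continuous f z -> continuous g z -> continuous (fun x => f x + g x) z.
Proof. exact (continuous_plus f g z). Qed.

Lemma cont_mult f g z : continuous f z -> continuous g z -> continuous (fun x => f x * g x) z.
Proof. exact (continuous_mult f g z). Qed.

Lemma cont_opp f z : continuous f z -> continuous (fun x => - f x) z.
Proof. exact (continuous_opp f z). Qed.

Lemma cont_inv f z : continuous f z -> f z <> 0 -> continuous (fun x => / f x) z.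
Proof. intros Hf Hz; apply (continuous_comp f Rinv); [exact Hf | apply continuous_Rinv, Hz]. Qed.

Lemma cont_sqrt f z : continuous f z -> continuous (fun x => sqrt (f x)) z.
Proof. intros Hf; apply (continuous_comp f sqrt); [exact Hf | apply continuous_sqrt]. Qed.

Lemma cont_abs f z : continuous f z -> continuous (fun x => Rabs (f x)) z.
Proof. intros Hf; apply (continuous_comp f Rabs); [exact Hf | apply continuous_Rabs]. Qed.

Lemma cont_pow f n z : continuous f z -> continuous (fun x => f x ^ n) z.
Proof. intros Hf; induction n; [apply continuous_const | apply cont_mult; assumption]. Qed.

End RealContinuity.

Lemma cont_fst (z : R * R) : continuous (fun y : R * R => fst y) z.
Proof. destruct z; apply continuous_fst. Qed.

Lemma cont_snd (z : R * R) : continuous (fun y : R * R => snd y) z.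
Proof. destruct z; apply continuous_snd. Qed.

Lemma cont_pair {U : UniformSpace} (f g : U -> R) z :
  continuous f z -> continuous g z -> continuous (fun x => (f x, g x)) z.
Proof.
  intros Hf Hg. apply (continuous_comp_2 f g pair); [exact Hf | exact Hg |].
  apply (continuous_ext (fun y : R * R => y)); [intros []; reflexivity | apply continuous_id].
Qed.

(* Continuity of expressions built from [+ - * / ^ sqrt Rabs], projections and
   functions continuous everywhere; divisions leave their nonvanishing side conditions. *)
Ltac auto_cont :=
  unfold Rminus, Rdiv;
  repeat match goal with
  | |- continuous (fun _ => _) _ => apply continuous_const
  | H : forall z, continuous ?f z |- continuous ?f _ => apply H
  | H : forall z, continuous ?f z |- continuous (fun y => ?f y) _ => apply H
  | |- continuous (fun _ => _ + _) _ => apply cont_plus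
  | |- continuous (fun _ => _ * _) _ => apply cont_mult
  | |- continuous (fun _ => - _) _ => apply cont_opp
  | |- continuous (fun _ => / _) _ => apply cont_inv
  | |- continuous (fun _ => _ ^ _) _ => apply cont_pow
  | |- continuous (fun _ => sqrt _) _ => apply cont_sqrt
  | |- continuous (fun _ => Rabs _) _ => apply cont_abs
  | |- continuous (fun y => fst y) _ => apply cont_fst
  | |- continuous fst _ => apply cont_fst
  | |- continuous (fun y => snd y) _ => apply cont_snd
  | |- continuous snd _ => apply cont_snd
  | |- continuous (fun y => y) _ => apply continuous_id
  end.

Lemma ellq_nonneg a1 a2 y : 0 < a1 -> 0 < a2 -> 0 <= ellq a1 a2 y.
Proof.
  intros Ha1 Ha2. unfold ellq.
  apply Rplus_le_le_0_compat; apply Rdiv_le_0_compat;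
    try apply pow2_ge_0; apply pow_lt; assumption.
Qed.

Lemma ellq_scale a1 a2 y c : 0 < a1 -> 0 < a2 -> c <> 0 ->
  ellq a1 a2 (fst y / c, snd y / c) = ellq a1 a2 y / c ^ 2.
Proof. intros. unfold ellq; simpl. field. repeat split; lra. Qed.

Lemma continuous_ellq a1 a2 z : continuous (ellq a1 a2) z.
Proof. unfold ellq. auto_cont. Qed.

Definition ell_retract (a1 a2 : R) (y : R * R) : R * R :=
  let q := Rmax 1 (sqrt (ellq a1 a2 y)) in (fst y / q, snd y / q).

Lemma ell_retract_closure a1 a2 y : 0 < a1 -> 0 < a2 -> in_closure a1 a2 (ell_retract a1 a2 y).
Proof.
  intros Ha1 Ha2. unfold in_closure, ell_retract; cbv zeta.
  pose proof (ellq_nonneg a1 a2 y Ha1 Ha2) as Hq.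
  destruct (Rle_dec (ellq a1 a2 y) 1) as [Hle | Hgt].
  - assert (sqrt (ellq a1 a2 y) <= 1) by (rewrite <- sqrt_1; apply sqrt_le_1_alt; exact Hle).
    rewrite Rmax_left by assumption. rewrite ellq_scale by lra. simpl. lra.
  - assert (1 <= sqrt (ellq a1 a2 y)) by (rewrite <- sqrt_1; apply sqrt_le_1_alt; lra).
    rewrite Rmax_right by assumption. rewrite ellq_scale by lra.
    rewrite <- Rsqr_pow2, Rsqr_sqrt by lra. unfold Rdiv. rewrite Rinv_r; lra.
Qed.

Lemma ell_retract_id a1 a2 y : in_closure a1 a2 y -> ell_retract a1 a2 y = y.
Proof.
  intros Hy. unfold ell_retract.
  assert (sqrt (ellq a1 a2 y) <= 1) by (rewrite <- sqrt_1; apply sqrt_le_1_alt; exact Hy).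
  rewrite Rmax_left by assumption. destruct y; simpl. f_equal; field.
Qed.

Lemma continuous_ell_retract a1 a2 z : continuous (ell_retract a1 a2) z.
Proof.
  set (q := fun y => (1 + sqrt (ellq a1 a2 y) + Rabs (sqrt (ellq a1 a2 y) - 1)) / 2).
  assert (Hq : forall y, Rmax 1 (sqrt (ellq a1 a2 y)) = q y).
  { intros y. unfold q, Rmax. destruct (Rle_dec 1 (sqrt (ellq a1 a2 y))).
    - rewrite Rabs_right; lra.
    - rewrite Rabs_left; lra. }
  assert (Hq1 : 1 <= q z) by (rewrite <- Hq; apply Rmax_l).
  assert (Hell : forall y, continuous (ellq a1 a2) y) by apply continuous_ellq.
  assert (Hqc : forall y, continuous q y) by (intros y; unfold q; auto_cont).
  apply (continuous_ext (fun y => (fst y / q y, snd y / q y))).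
  { intros y. unfold ell_retract. rewrite Hq. reflexivity. }
  apply cont_pair; auto_cont; lra.
Qed.

Definition ell_ext (a1 a2 : R) (f : R * R -> R) (y : R * R) : R := f (ell_retract a1 a2 y).

Lemma ell_ext_closure a1 a2 f y : in_closure a1 a2 y -> ell_ext a1 a2 f y = f y.
Proof. intros Hy. unfold ell_ext. rewrite ell_retract_id by exact Hy. reflexivity. Qed.

Lemma continuous_ell_ext a1 a2 f : 0 < a1 -> 0 < a2 -> cont_on (in_closure a1 a2) f ->
  forall z, continuous (ell_ext a1 a2 f) z.
Proof.
  intros Ha1 Ha2 Hf z. unfold continuous, ell_ext.
  apply filterlim_comp with (G := within (in_closure a1 a2) (locally (ell_retract a1 a2 z))).
  - intros P HP. unfold filtermap.
    eapply filter_imp; [| exact (continuous_ell_retract a1 a2 z _ HP)].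
    intros x Hx. exact (Hx (ell_retract_closure a1 a2 x Ha1 Ha2)).
  - apply Hf, ell_retract_closure; assumption.
Qed.

Lemma locally_lt_of_continuous (f : R -> R) x c : continuous f x -> f x < c ->
  locally x (fun t => f t < c).
Proof.
  intros Hf Hx. assert (He : 0 < c - f x) by lra.
  eapply filter_imp; [| exact (Hf _ (locally_ball (f x) (mkposreal _ He)))].
  intros t Ht. change (Rabs (f t - f x) < c - f x) in Ht. apply Rabs_lt_between in Ht. lra.
Qed.

Lemma locally_omega_slice1 a1 a2 z : in_omega a1 a2 z ->
  locally (fst z) (fun t => in_omega a1 a2 (t, snd z)).
Proof.
  intros Hz. apply (locally_lt_of_continuous (fun t => ellq a1 a2 (t, snd z))); [| exact Hz].
  apply (continuous_comp (fun t => (t, snd z))); [apply cont_pair; auto_cont | apply continuous_ellq].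
Qed.

Lemma locally_omega_slice2 a1 a2 z : in_omega a1 a2 z ->
  locally (snd z) (fun t => in_omega a1 a2 (fst z, t)).
Proof.
  intros Hz. apply (locally_lt_of_continuous (fun t => ellq a1 a2 (fst z, t))); [| exact Hz].
  apply (continuous_comp (fun t => (fst z, t))); [apply cont_pair; auto_cont | apply continuous_ellq].
Qed.

Lemma omega_closure a1 a2 z : in_omega a1 a2 z -> in_closure a1 a2 z.
Proof. unfold in_omega, in_closure; lra. Qed.

Lemma partials_in_omega_ell_ext a1 a2 f g1 g2 : partials_in_omega a1 a2 f g1 g2 ->
  partials_in_omega a1 a2 (ell_ext a1 a2 f) (ell_ext a1 a2 g1) (ell_ext a1 a2 g2).
Proof.
  intros Hf z Hz. destruct (Hf z Hz) as [H1 H2].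
  rewrite !ell_ext_closure by (apply omega_closure; exact Hz). split.
  - apply (is_derive_ext_loc (fun t => f (t, snd z))); [| exact H1].
    eapply filter_imp; [| exact (locally_omega_slice1 a1 a2 z Hz)].
    intros t Ht. symmetry. apply ell_ext_closure, omega_closure, Ht.
  - apply (is_derive_ext_loc (fun t => f (fst z, t))); [| exact H2].
    eapply filter_imp; [| exact (locally_omega_slice2 a1 a2 z Hz)].
    intros t Ht. symmetry. apply ell_ext_closure, omega_closure, Ht.
Qed.

(** * Integrals in one variable *)

(* Instances at [R] of Coquelicot's lemmas on normed modules, so that [rewrite] sees
   [Rplus] and [Rmult]. *)
Section RInt_R.
Implicit Types f g : R -> R.

Lemma ex_RInt_cont f a b : (forall t, continuous f t) -> ex_RInt f a b.
Proof. intros Hf. apply (ex_RInt_continuous (V := R_CompleteNormedModule)). intros; apply Hf. Qed.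

Lemma RInt_plus_R f g a b : ex_RInt f a b -> ex_RInt g a b ->
  RInt (fun x => f x + g x) a b = RInt f a b + RInt g a b.
Proof. exact (RInt_plus (V := R_CompleteNormedModule) f g a b). Qed.

Lemma RInt_minus_R f g a b : ex_RInt f a b -> ex_RInt g a b ->
  RInt (fun x => f x - g x) a b = RInt f a b - RInt g a b.
Proof. exact (RInt_minus (V := R_CompleteNormedModule) f g a b). Qed.

Lemma RInt_scal_R f a b c : ex_RInt f a b -> RInt (fun x => c * f x) a b = c * RInt f a b.
Proof. exact (RInt_scal (V := R_CompleteNormedModule) f a b c). Qed.

Lemma RInt_Chasles_R f a b c : ex_RInt f a b -> ex_RInt f b c ->
  RInt f a b + RInt f b c = RInt f a c.
Proof. exact (RInt_Chasles (V := R_CompleteNormedModule) f a b c). Qed.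

Lemma RInt_swap_R f a b : ex_RInt f a b -> RInt f b a = - RInt f a b.
Proof. intros Hf. rewrite <- (opp_RInt_swap (V := R_CompleteNormedModule)) by exact Hf. reflexivity. Qed.

Lemma RInt_ext_R f g a b : (forall x, Rmin a b < x < Rmax a b -> f x = g x) ->
  RInt f a b = RInt g a b.
Proof. exact (RInt_ext (V := R_CompleteNormedModule) f g a b). Qed.

Lemma RInt_point_R f a : RInt f a a = 0.
Proof. exact (RInt_point (V := R_CompleteNormedModule) a f). Qed.

Lemma continuous_RInt_upper f a b : (forall t, continuous f t) ->
  continuous (fun s => RInt f a s) b.
Proof.
  intros Hf. apply (continuous_RInt_1 f a b (fun s => RInt f a s)).
  apply filter_forall. intros s. apply (RInt_correct (V := R_CompleteNormedModule)), ex_RInt_cont, Hf.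
Qed.

Lemma RInt_derive_open (F g : R -> R) a b : a <= b ->
  (forall t, continuous F t) -> (forall t, continuous g t) ->
  (forall t, a < t < b -> is_derive F t (g t)) -> RInt g a b = F b - F a.
Proof.
  intros Hab HF Hg HFg.
  set (h := fun x => RInt g a x - F x).
  destruct (MVT_gen h a b (fun _ => 0)) as [c [_ Hc]].
  - rewrite Rmin_left, Rmax_right by exact Hab. intros x Hx.
    replace 0 with (g x - g x) by ring. apply (is_derive_minus (fun x => RInt g a x) F).
    + apply (is_derive_RInt g (fun x => RInt g a x) a x); [| apply Hg].
      apply filter_forall. intros s. apply (RInt_correct (V := R_CompleteNormedModule)), ex_RInt_cont, Hg.
    + apply HFg, Hx.
  - intros x _. apply continuity_pt_filterlim. unfold h.
    apply (continuous_minus (fun x => RInt g a x) F); [apply continuous_RInt_upper, Hg | apply HF].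
  - unfold h in Hc. rewrite RInt_point_R in Hc. lra.
Qed.

Lemma abs_RInt_le_open g a b M : (forall t, continuous g t) ->
  (forall t, Rmin a b < t < Rmax a b -> Rabs (g t) <= M) ->
  Rabs (RInt g a b) <= Rabs (b - a) * M.
Proof.
  intros Hg HM.
  assert (Hle : forall a b, a <= b -> (forall t, a < t < b -> Rabs (g t) <= M) ->
            Rabs (RInt g a b) <= (b - a) * M).
  { clear a b HM. intros a b Hab HM.
    assert (Hc : forall c, RInt (fun _ => c) a b = (b - a) * c)
      by (intros; rewrite RInt_const; reflexivity).
    assert (Ex : forall f, (forall t, continuous f t) -> ex_RInt f a b)
      by (intros; apply ex_RInt_cont; assumption).
    apply Rabs_le. split.
    - replace (- ((b - a) * M)) with ((b - a) * - M) by ring. rewrite <- Hc.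
      apply RInt_le; try (apply Ex; intro; auto_cont); [exact Hab |].
      intros t Ht. specialize (HM t Ht). apply Rabs_le_between in HM. lra.
    - rewrite <- Hc. apply RInt_le; try (apply Ex; intro; auto_cont); [exact Hab |].
      intros t Ht. specialize (HM t Ht). apply Rabs_le_between in HM. lra. }
  destruct (Rle_dec a b) as [Hab | Hba].
  - rewrite (Rabs_right (b - a)) by lra. apply Hle; [exact Hab |].
    intros t Ht. apply HM. rewrite Rmin_left, Rmax_right; lra.
  - rewrite (RInt_swap_R g b a (ex_RInt_cont g b a Hg)), Rabs_Ropp, (Rabs_left (b - a)) by lra.
    replace (- (b - a)) with (a - b) by ring. apply Hle; [lra |].
    intros t Ht. apply HM. rewrite Rmin_right, Rmax_left; lra.
Qed.

Lemma abs_RInt_le_width g a b w M : (forall t, continuous g t) -> 0 <= M -> Rabs (b - a) <= w ->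
  (forall t, Rmin a b < t < Rmax a b -> Rabs (g t) <= M) -> Rabs (RInt g a b) <= w * M.
Proof.
  intros Hg HM Hw HgM. eapply Rle_trans; [apply abs_RInt_le_open; [exact Hg | exact HgM] |].
  apply Rmult_le_compat_r; assumption.
Qed.

Lemma MVT_increment_bound f g a b e :
  (forall s, Rmin a b <= s <= Rmax a b -> is_derive f s (g s)) ->
  (forall s, Rmin a b <= s <= Rmax a b -> Rabs (g s - g a) <= e) ->
  Rabs (f b - f a - (b - a) * g a) <= Rabs (b - a) * e.
Proof.
  intros Hfg He.
  destruct (MVT_gen f a b g) as [c [Hc Hfc]].
  - intros s Hs. apply Hfg. lra.
  - intros s Hs. apply continuity_pt_filterlim, (ex_derive_continuous (V := R_NormedModule)). exists (g s). apply Hfg, Hs.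
  - rewrite Hfc. replace (g c * (b - a) - (b - a) * g a) with ((b - a) * (g c - g a)) by ring.
    rewrite Rabs_mult. apply Rmult_le_compat_l; [apply Rabs_pos | apply He, Hc].
Qed.

End RInt_R.

(** * Integrals depending on a parameter *)

Lemma continuous_of_locally_abs (f : R -> R) x0 :
  (forall eps : posreal, locally x0 (fun x => Rabs (f x - f x0) < eps)) -> continuous f x0.
Proof.
  intros Hf P [eps HP]. unfold filtermap. eapply filter_imp; [| exact (Hf eps)]. intros x Hx. exact (HP (f x) Hx).
Qed.

Lemma locally_abs_of_continuous (f : R -> R) x0 (eps : posreal) :
  continuous f x0 -> locally x0 (fun x => Rabs (f x - f x0) < eps).
Proof. intros Hf. exact (Hf _ (locally_ball (f x0) eps)). Qed.

Lemma locally_closed_ball x0 (P : R -> Prop) : locally x0 P ->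
  locally x0 (fun x => forall s, Rabs (s - x0) <= Rabs (x - x0) -> P s).
Proof.
  intros [d Hd]. exists d. intros x Hx s Hs. apply Hd. change (Rabs (s - x0) < d). change (Rabs (x - x0) < d) in Hx. lra.
Qed.

Lemma locally_scaled_dist x0 c e : 0 < e -> locally x0 (fun x => c * Rabs (x - x0) < e).
Proof.
  intros He. assert (Hd : 0 < e / (Rabs c + 1)) by (apply Rdiv_lt_0_compat; pose proof (Rabs_pos c); lra).
  exists (mkposreal _ Hd). intros x Hx. change (Rabs (x - x0) < e / (Rabs c + 1)) in Hx.
  assert (Hc : 0 <= Rabs c) by apply Rabs_pos.
  assert (Hx' : (Rabs c + 1) * Rabs (x - x0) < e).
  { apply Rmult_lt_compat_l with (r := Rabs c + 1) in Hx; [| lra].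
    replace ((Rabs c + 1) * (e / (Rabs c + 1))) with e in Hx by (field; lra). exact Hx. }
  pose proof (Rle_abs c). pose proof (Rabs_pos (x - x0)). nra.
Qed.

Lemma continuous_2d_ball (f : R * R -> R) z eps : continuous f z -> 0 < eps ->
  exists d : posreal, forall x t, Rabs (x - fst z) < d -> Rabs (t - snd z) < d ->
    Rabs (f (x, t) - f z) < eps.
Proof.
  intros Hf He. destruct (Hf _ (locally_ball (f z) (mkposreal _ He))) as [d Hd].
  exists d. intros x t Hx Ht. apply (Hd (x, t)). destruct z; split; assumption.
Qed.

Lemma continuous_slice2 (f : R * R -> R) x t : (forall z, continuous f z) ->
  continuous (fun t => f (x, t)) t.
Proof. intros Hf. apply (continuous_comp (fun t => (x, t))); [apply cont_pair; auto_cont | apply Hf]. Qed.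

Lemma ex_RInt_slice2 (f : R * R -> R) x a b : (forall z, continuous f z) ->
  ex_RInt (fun t => f (x, t)) a b.
Proof. intros Hf. apply ex_RInt_cont. intros t. apply continuous_slice2, Hf. Qed.

Lemma slice_uniform_continuity (f : R * R -> R) x0 a b (eps : posreal) :
  (forall z, continuous f z) ->
  locally x0 (fun x => forall t, a <= t <= b -> Rabs (f (x, t) - f (x0, t)) < eps).
Proof.
  intros Hf.
  assert (He2 : 0 < eps / 2) by (pose proof (cond_pos eps); lra).
  assert (Hex : forall t, exists d : posreal, forall x s, Rabs (x - x0) < d -> Rabs (s - t) < d ->
     Rabs (f (x, s) - f (x0, t)) < eps / 2)
    by (intros t; exact (continuous_2d_ball f (x0, t) _ (Hf _) He2)).
  destruct (choice _ Hex) as [delta Hdelta].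
  destruct (compactness_value_1d a b delta) as [d Hd].
  exists d. intros x Hx t Ht. change (Rabs (x - x0) < d) in Hx.
  apply NNPP. intros Hn. apply (Hd t Ht). intros [u [_ [Htu Hdu]]]. apply Hn.
  assert (A1 := Hdelta u x t ltac:(lra) Htu).
  assert (A2 := Hdelta u x0 t ltac:(rewrite Rminus_diag, Rabs_R0; apply cond_pos) Htu).
  replace (f (x, t) - f (x0, t)) with ((f (x, t) - f (x0, u)) - (f (x0, t) - f (x0, u))) by ring.
  eapply Rle_lt_trans; [apply Rabs_triang |]. rewrite Rabs_Ropp.
  apply Rlt_le_trans with (eps / 2 + eps / 2); [apply Rplus_lt_compat; assumption | lra].
Qed.

Lemma continuous_RInt_param_0 (f : R * R -> R) (w : R -> R) x0 :
  (forall z, continuous f z) -> continuous w x0 ->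
  continuous (fun x => RInt (fun t => f (x, t)) 0 (w x)) x0.
Proof.
  intros Hf Hw. apply continuous_of_locally_abs. intros eps.
  set (A := Rabs (w x0) + 1).
  assert (HA : 0 < A) by (unfold A; pose proof (Rabs_pos (w x0)); lra).
  assert (He : 0 < eps / (2 * (A + 1))) by (apply Rdiv_lt_0_compat; [apply cond_pos | lra]).
  set (G := fun s => RInt (fun t => f (x0, t)) 0 s).
  assert (HG : continuous (fun x => G (w x)) x0).
  { apply (continuous_comp w G); [exact Hw |]. apply continuous_RInt_upper. intros t; apply continuous_slice2, Hf. }
  generalize (filter_and _ _ (locally_abs_of_continuous _ _ (pos_div_2 eps) HG)
    (filter_and _ _ (locally_abs_of_continuous _ _ (mkposreal 1 Rlt_0_1) Hw)
       (slice_uniform_continuity f x0 (- A) A (mkposreal _ He) Hf))).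
  apply filter_imp. intros x [HGx [Hwx Hfx]]. simpl in HGx, Hwx, Hfx.
  assert (HwA : Rabs (w x) < A) by (unfold A; pose proof (Rabs_triang_inv (w x) (w x0)); lra).
  replace (RInt (fun t => f (x, t)) 0 (w x) - G (w x0))
    with (RInt (fun t => f (x, t) - f (x0, t)) 0 (w x) + (G (w x) - G (w x0)))
    by (unfold G; rewrite RInt_minus_R by (apply ex_RInt_slice2, Hf); ring).
  assert (Hbound : Rabs (RInt (fun t => f (x, t) - f (x0, t)) 0 (w x)) <= A * (eps / (2 * (A + 1)))).
  { eapply Rle_trans.
    - apply abs_RInt_le_open; [intros t; auto_cont; apply continuous_slice2, Hf |].
      intros t Ht. left. apply Hfx.
      unfold Rmin, Rmax in Ht. destruct (Rle_dec 0 (w x)); apply Rabs_lt_between in HwA; lra.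
    - rewrite Rminus_0_r. apply Rmult_le_compat_r; lra. }
  assert (A * (eps / (2 * (A + 1))) < eps / 2).
  { replace (eps / 2) with (A * (eps / (2 * (A + 1))) + eps / (2 * (A + 1))) by (field; lra). lra. }
  eapply Rle_lt_trans; [apply Rabs_triang | lra].
Qed.

Lemma continuous_RInt_param (f : R * R -> R) (u v : R -> R) x0 :
  (forall z, continuous f z) -> continuous u x0 -> continuous v x0 ->
  continuous (fun x => RInt (fun t => f (x, t)) (u x) (v x)) x0.
Proof.
  intros Hf Hu Hv.
  apply (continuous_ext (fun x => RInt (fun t => f (x, t)) 0 (v x) - RInt (fun t => f (x, t)) 0 (u x))).
  - intros x. rewrite <- (RInt_Chasles_R _ 0 (u x) (v x)) by (apply ex_RInt_slice2, Hf). lra.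
  - apply cont_plus; [| apply cont_opp]; apply continuous_RInt_param_0; assumption.
Qed.

Lemma Rmin_dist_l a b : Rabs (a - Rmin a b) <= Rabs (a - b).
Proof. unfold Rmin. destruct (Rle_dec a b); [rewrite Rminus_diag, Rabs_R0; apply Rabs_pos | lra]. Qed.

Lemma Rmin_dist_r a b : Rabs (b - Rmin a b) <= Rabs (a - b).
Proof. rewrite Rmin_comm, Rabs_minus_sym with (x := a). apply Rmin_dist_l. Qed.

Lemma is_derive_of_locally_small (f : R -> R) y l :
  (forall eps : posreal, locally y (fun x => Rabs (f x - f y - (x - y) * l) <= eps * Rabs (x - y))) ->
  is_derive f y l.
Proof.
  intros Hf. split; [apply is_linear_scal_l |].
  intros x Hx. apply (is_filter_lim_locally_unique (V := R_NormedModule)) in Hx. subst x.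
  intros eps. eapply filter_imp; [| exact (Hf eps)]. intros x Hx.
  unfold norm, minus, plus, opp, scal; simpl. unfold mult; simpl.
  replace (f x + - f y + - ((x + - y) * l)) with (f x - f y - (x - y) * l) by ring. exact Hx.
Qed.

Lemma locally_lipschitz_of_is_derive (f : R -> R) y d : is_derive f y d ->
  locally y (fun x => Rabs (f x - f y) <= (Rabs d + 1) * Rabs (x - y)).
Proof.
  intros [_ Hd]. specialize (Hd y (fun P HP => HP) (mkposreal 1 Rlt_0_1)).
  eapply filter_imp; [| exact Hd]. intros x Hx.
  assert (Hx' : Rabs (f x - f y - (x - y) * d) <= Rabs (x - y)).
  { unfold norm, minus, plus, opp, scal, abs in Hx; simpl in Hx. unfold mult in Hx; simpl in Hx.
    replace (f x - f y - (x - y) * d) with (f x + - f y + - ((x + - y) * d)) by ring.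
    replace (x - y) with (x + - y) by ring.
    change (Rabs (f x + - f y + - ((x + - y) * d)) <= 1 * Rabs (x + - y)) in Hx. lra. }
  replace (f x - f y) with ((f x - f y - (x - y) * d) + (x - y) * d) by ring.
  eapply Rle_trans; [apply Rabs_triang |]. rewrite Rabs_mult.
  pose proof (Rabs_pos (x - y)). nra.
Qed.

Section ParamIntegralDerivative.
Variables (F G : R * R -> R) (phi : R -> R).
Hypothesis (HF : forall z, continuous F z) (HG : forall z, continuous G z).
Hypothesis HFG : forall s t, 0 <= t < phi s -> is_derive (fun u => F (u, t)) s (G (s, t)).

Let Phi (x : R) : R := RInt (fun t => F (x, t)) 0 (phi x).

Lemma RInt_param_increment_below y x m e :
  0 < m -> (forall s, Rmin y x <= s <= Rmax y x -> m <= phi s) ->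
  (forall s t, Rabs (s - y) <= Rabs (x - y) -> 0 <= t <= m -> Rabs (G (s, t) - G (y, t)) <= e) ->
  Rabs (RInt (fun t => F (x, t) - F (y, t) - (x - y) * G (y, t)) 0 m) <= m * (Rabs (x - y) * e).
Proof.
  intros Hm Hbelow HGe.
  replace m with (m - 0) at 2 by ring. rewrite <- (Rabs_right (m - 0)) by lra.
  apply abs_RInt_le_open; [intros t; auto_cont; apply continuous_slice2; assumption |].
  intros t Ht. rewrite Rmin_left, Rmax_right in Ht by lra.
  apply (MVT_increment_bound (fun u => F (u, t)) (fun u => G (u, t))).
  - intros s Hs. apply HFG. specialize (Hbelow s Hs). lra.
  - intros s Hs. apply HGe; [| lra]. unfold Rmin, Rmax in Hs. destruct (Rle_dec y x);
      [rewrite !Rabs_right | rewrite !Rabs_left1]; lra.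
Qed.

(* The increment of [Phi] is split at [m = min (phi x) (phi y)]: below [m] the mean
   value theorem applies, and the remaining pieces are short since [phi] is Lipschitz. *)
Lemma RInt_param_increment_bound y x e1 e2 L M :
  0 < phi x -> 0 < phi y -> 0 <= L -> 0 <= e1 -> 0 <= e2 -> 0 <= M ->
  Rabs (phi x - phi y) <= L * Rabs (x - y) ->
  (forall s, Rmin y x <= s <= Rmax y x -> Rmin (phi y) (phi x) <= phi s) ->
  (forall s t, Rabs (s - y) <= Rabs (x - y) -> 0 <= t <= phi y -> Rabs (G (s, t) - G (y, t)) <= e1) ->
  (forall u t, Rabs (u - y) <= Rabs (x - y) -> Rabs (t - phi y) <= L * Rabs (x - y) -> Rabs (F (u, t)) <= e2) ->
  (forall t, Rabs (t - phi y) <= L * Rabs (x - y) -> Rabs (G (y, t)) <= M) ->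
  Rabs (Phi x - Phi y - (x - y) * RInt (fun t => G (y, t)) 0 (phi y))
    <= Rabs (x - y) * (phi y * e1 + 2 * (L * e2) + L * Rabs (x - y) * M).
Proof.
  intros Hx Hy HL He1 He2 HM Hlip Hbetween HGe1 HFe2 HGM. unfold Phi.
  set (h := x - y) in *. set (m := Rmin (phi x) (phi y)).
  assert (Hm : 0 < m <= phi y) by (split; [apply Rmin_pos | apply Rmin_r]; lra).
  assert (Hmx : Rabs (phi x - m) <= L * Rabs h) by (eapply Rle_trans; [apply Rmin_dist_l | exact Hlip]).
  assert (Hmy : Rabs (phi y - m) <= L * Rabs h) by (eapply Rle_trans; [apply Rmin_dist_r | exact Hlip]).
  assert (Hnear : forall t, Rmin m (phi y) < t < Rmax m (phi y) \/ Rmin m (phi x) < t < Rmax m (phi x) ->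
            Rabs (t - phi y) <= L * Rabs h).
  { intros t Ht. unfold m, Rmin, Rmax in Ht. apply Rabs_le_between in Hlip.
    apply Rabs_le_between. destruct Ht as [Ht | Ht]; repeat destruct (Rle_dec _ _) in Ht; lra. }
  assert (Hyy : Rabs (y - y) <= Rabs h) by (rewrite Rminus_diag, Rabs_R0; apply Rabs_pos).
  assert (BA := RInt_param_increment_below y x m e1 (proj1 Hm)
    ltac:(intros s Hs; specialize (Hbetween s Hs); unfold m; rewrite Rmin_comm; exact Hbetween)
    ltac:(intros s t Hs Ht; apply HGe1; [exact Hs | lra])). fold h in BA.
  assert (B1 : Rabs (RInt (fun t => F (x, t)) m (phi x)) <= L * Rabs h * e2).
  { apply abs_RInt_le_width; try assumption; [intros; apply continuous_slice2, HF |].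
    intros t Ht. apply HFe2; [apply Rle_refl | apply Hnear; right; exact Ht]. }
  assert (B2 : Rabs (RInt (fun t => F (y, t)) m (phi y)) <= L * Rabs h * e2).
  { apply abs_RInt_le_width; try assumption; [intros; apply continuous_slice2, HF |].
    intros t Ht. apply HFe2; [exact Hyy | apply Hnear; left; exact Ht]. }
  assert (B3 : Rabs (h * RInt (fun t => G (y, t)) m (phi y)) <= Rabs h * (L * Rabs h * M)).
  { rewrite Rabs_mult. apply Rmult_le_compat_l; [apply Rabs_pos |].
    apply abs_RInt_le_width; try assumption; [intros; apply continuous_slice2, HG |].
    intros t Ht. apply HGM, Hnear. left. exact Ht. }
  assert (Hsplit : RInt (fun t => F (x, t)) 0 (phi x) - RInt (fun t => F (y, t)) 0 (phi y)
      - h * RInt (fun t => G (y, t)) 0 (phi y)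
    = RInt (fun t => F (x, t) - F (y, t) - h * G (y, t)) 0 m + RInt (fun t => F (x, t)) m (phi x)
      - RInt (fun t => F (y, t)) m (phi y) - h * RInt (fun t => G (y, t)) m (phi y)).
  { rewrite <- (RInt_Chasles_R (fun t => F (x, t)) 0 m (phi x)), <- (RInt_Chasles_R (fun t => F (y, t)) 0 m (phi y)),
      <- (RInt_Chasles_R (fun t => G (y, t)) 0 m (phi y)) by (apply ex_RInt_slice2; assumption).
    rewrite RInt_minus_R, RInt_minus_R, RInt_scal_R; try lra;
      apply ex_RInt_cont; intros t; auto_cont; apply continuous_slice2; assumption. }
  rewrite Hsplit. unfold Rminus at 1 2.
  eapply Rle_trans; [apply Rabs_triang |]. rewrite Rabs_Ropp.
  eapply Rle_trans; [apply Rplus_le_compat_r, Rabs_triang |]. rewrite Rabs_Ropp.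
  eapply Rle_trans; [apply Rplus_le_compat_r, Rplus_le_compat_r, Rabs_triang |].
  assert (m * (Rabs h * e1) <= phi y * (Rabs h * e1))
    by (apply Rmult_le_compat_r; [apply Rmult_le_pos; [apply Rabs_pos | exact He1] | lra]).
  nra.
Qed.

(* Leibniz rule with [F] differentiable in [x] only below the graph of [phi]; the
   boundary term [phi' y * F (y, phi y)] vanishes. *)
Lemma is_derive_RInt_param_upper y :
  0 < phi y -> ex_derive phi y -> F (y, phi y) = 0 ->
  (forall x s, Rmin y x <= s <= Rmax y x -> Rmin (phi y) (phi x) <= phi s) ->
  is_derive Phi y (RInt (fun t => G (y, t)) 0 (phi y)).
Proof.
  intros Hy [d Hd] HF0 Hbetween. apply is_derive_of_locally_small. intros eps.
  set (L := Rabs d + 1). set (M := Rabs (G (y, phi y)) + 1).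
  assert (HL : 0 < L) by (unfold L; pose proof (Rabs_pos d); lra).
  assert (HM : 0 < M) by (unfold M; pose proof (Rabs_pos (G (y, phi y))); lra).
  pose proof (cond_pos eps) as Heps.
  assert (He1 : 0 < eps / (4 * (phi y + 1))) by (apply Rdiv_lt_0_compat; lra).
  assert (He2 : 0 < eps / (4 * (L + 1))) by (apply Rdiv_lt_0_compat; lra).
  set (e1 := mkposreal _ He1). set (e2 := mkposreal _ He2).
  destruct (continuous_2d_ball F (y, phi y) e2 (HF _) (cond_pos e2)) as [dF HdF].
  destruct (continuous_2d_ball G (y, phi y) 1 (HG _) Rlt_0_1) as [dG HdG]. simpl in HdF, HdG.
  generalize (filter_and _ _ (locally_lipschitz_of_is_derive phi y d Hd)
    (filter_and _ _ (locally_scaled_dist y L (phi y) Hy)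
    (filter_and _ _ (locally_closed_ball y _ (slice_uniform_continuity G y 0 (phi y) e1 HG))
    (filter_and _ _ (locally_scaled_dist y 1 dF (cond_pos dF))
    (filter_and _ _ (locally_scaled_dist y L dF (cond_pos dF))
    (filter_and _ _ (locally_scaled_dist y L dG (cond_pos dG))
                    (locally_scaled_dist y (L * M) (eps / 4) ltac:(lra)))))))).
  apply filter_imp. intros x (Hlip & HLb & HGunif & HdF1 & HdFL & HdGL & HLM). fold L in Hlip.
  eapply Rle_trans.
  - apply (RInt_param_increment_bound y x e1 e2 L M); try assumption; try lra.
    + apply Rabs_le_between in Hlip. lra.
    + apply Rlt_le, cond_pos.
    + apply Rlt_le, cond_pos.
    + apply Hbetween.
    + intros s t Hs Ht. left. apply HGunif; assumption.
    + intros u t Hu Ht. rewrite <- (Rminus_0_r (F (u, t))), <- HF0. left. apply HdF; lra.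
    + intros t Ht. assert (Rabs (G (y, t) - G (y, phi y)) < 1) by (apply HdG; [rewrite Rminus_diag, Rabs_R0; apply cond_pos | lra]).
      unfold M. pose proof (Rabs_triang_inv (G (y, t)) (G (y, phi y))). lra.
  - rewrite Rmult_comm. apply Rmult_le_compat_r; [apply Rabs_pos |].
    assert (phi y * e1 <= eps / 4).
    { replace (eps / 4) with (phi y * e1 + e1) by (simpl; field; lra). simpl. lra. }
    assert (L * e2 <= eps / 4).
    { replace (eps / 4) with (L * e2 + e2) by (simpl; field; lra). simpl. lra. }
    lra.
Qed.

End ParamIntegralDerivative.

(** * Integrals over the ellipse *)

Section EllipseSlices.
Variables a1 a2 : R.
Hypotheses (Ha1 : 0 < a1) (Ha2 : 0 < a2).

Lemma one_minus_sq_div x : 1 - x ^ 2 / a1 ^ 2 = (a1 - x) * (a1 + x) / a1 ^ 2.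
Proof. field. lra. Qed.

Lemma ell_bound_sq x : -a1 <= x <= a1 -> ell_bound a1 a2 x ^ 2 = a2 ^ 2 * (1 - x ^ 2 / a1 ^ 2).
Proof.
  intros Hx. unfold ell_bound. rewrite Rpow_mult_distr, <- Rsqr_pow2 with (x := sqrt _), Rsqr_sqrt.
  - reflexivity.
  - rewrite one_minus_sq_div. apply Rdiv_le_0_compat; [nra | apply pow_lt, Ha1].
Qed.

Lemma ell_bound_nonneg x : 0 <= ell_bound a1 a2 x.
Proof. apply Rmult_le_pos; [lra | apply sqrt_pos]. Qed.

Lemma ell_bound_pos x : -a1 < x < a1 -> 0 < ell_bound a1 a2 x.
Proof.
  intros Hx. apply Rmult_lt_0_compat; [exact Ha2 |]. apply sqrt_lt_R0.
  rewrite one_minus_sq_div. apply Rdiv_lt_0_compat; [nra | apply pow_lt, Ha1].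
Qed.

Lemma ell_bound_outside x : ~ (-a1 < x < a1) -> ell_bound a1 a2 x = 0.
Proof.
  intros Hx. unfold ell_bound. rewrite sqrt_neg_0; [ring |].
  rewrite one_minus_sq_div. unfold Rdiv.
  assert (0 < / a1 ^ 2) by (apply Rinv_0_lt_compat, pow_lt, Ha1).
  assert ((a1 - x) * (a1 + x) <= 0) by (destruct (Rle_dec x (- a1)); nra).
  nra.
Qed.

Lemma continuous_ell_bound x : continuous (ell_bound a1 a2) x.
Proof. unfold ell_bound. auto_cont. Qed.

Lemma ex_derive_ell_bound x : -a1 < x < a1 -> ex_derive (ell_bound a1 a2) x.
Proof.
  intros Hx. unfold ell_bound. auto_derive.
  replace (1 + - (x * (x * 1) * / (a1 * (a1 * 1)))) with (1 - x ^ 2 / a1 ^ 2) by (field; lra).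
  rewrite one_minus_sq_div. apply Rdiv_lt_0_compat; [nra | apply pow_lt, Ha1].
Qed.

Lemma in_Gamma_ell_bound x t : -a1 <= x <= a1 -> t ^ 2 = ell_bound a1 a2 x ^ 2 ->
  in_Gamma a1 a2 (x, t).
Proof.
  intros Hx Ht. unfold in_Gamma, ellq; cbn [fst snd]. rewrite Ht, ell_bound_sq by exact Hx. field. lra.
Qed.

Lemma in_omega_ell_bound x t : - ell_bound a1 a2 x < t < ell_bound a1 a2 x -> in_omega a1 a2 (x, t).
Proof.
  intros Ht. destruct (Rlt_dec (-a1) x); [destruct (Rlt_dec x a1) |];
    try (rewrite ell_bound_outside in Ht by lra; lra).
  unfold in_omega, ellq; cbn [fst snd].
  assert (Hb := ell_bound_nonneg x).
  assert (Htb : t ^ 2 < a2 ^ 2 * (1 - x ^ 2 / a1 ^ 2)) by (rewrite <- ell_bound_sq by lra; nra).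
  apply (Rmult_lt_compat_r (/ a2 ^ 2)) in Htb; [| apply Rinv_0_lt_compat, pow_lt, Ha2].
  replace (a2 ^ 2 * (1 - x ^ 2 / a1 ^ 2) * / a2 ^ 2) with (1 - x ^ 2 / a1 ^ 2) in Htb by (field; lra).
  unfold Rdiv at 2. lra.
Qed.

(* [ell_bound] decreases with [|x|], so on a segment it stays above the smaller end value. *)
Lemma ell_bound_between y x s : Rmin y x <= s <= Rmax y x ->
  Rmin (ell_bound a1 a2 y) (ell_bound a1 a2 x) <= ell_bound a1 a2 s.
Proof.
  intros Hs.
  assert (Hmono : forall u v, u ^ 2 <= v ^ 2 -> ell_bound a1 a2 v <= ell_bound a1 a2 u).
  { intros u v Huv. apply Rmult_le_compat_l; [lra |]. apply sqrt_le_1_alt.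
    assert (0 < / a1 ^ 2) by (apply Rinv_0_lt_compat, pow_lt, Ha1). unfold Rdiv. nra. }
  assert (Hsq : s ^ 2 <= y ^ 2 \/ s ^ 2 <= x ^ 2)
    by (unfold Rmin, Rmax in Hs; destruct (Rle_dec y x); destruct (Rle_dec 0 s); [right | left | left | right]; nra).
  destruct Hsq as [Hsq | Hsq];
    [eapply Rle_trans; [apply Rmin_l | apply Hmono, Hsq] | eapply Rle_trans; [apply Rmin_r | apply Hmono, Hsq]].
Qed.

End EllipseSlices.

Lemma RInt_symmetric_split (f : R -> R) c : (forall t, continuous f t) ->
  RInt f (- c) c = RInt f 0 c + RInt (fun t => f (- t)) 0 c.
Proof.
  intros Hf.
  assert (Hrefl : RInt f (- c) 0 = RInt (fun t => f (- t)) 0 c).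
  { pose proof (RInt_comp_lin (V := R_CompleteNormedModule) f (-1) 0 c 0) as H.
    replace (-1 * c + 0) with (- c) in H by ring. replace (-1 * 0 + 0) with 0 in H by ring.
    rewrite <- H by (apply ex_RInt_cont, Hf). clear H.
    assert (Hfm : forall t, continuous (fun t => f (- t)) t)
      by (intros t; apply (continuous_comp (fun t => - t) f); [auto_cont | apply Hf]).
    rewrite (RInt_swap_R (fun t => f (- t)) c 0) by (apply ex_RInt_cont, Hfm).
    rewrite (RInt_ext_R _ (fun t => -1 * f (- t))) by (intros; unfold scal; simpl; unfold mult; simpl; do 2 f_equal; ring).
    rewrite RInt_scal_R by (apply ex_RInt_cont, Hfm). lra. }
  rewrite <- Hrefl, <- (RInt_Chasles_R f (- c) 0 c) by (apply ex_RInt_cont, Hf). lra.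
Qed.

Section IntegralOverEllipse.
Variables a1 a2 : R.
Hypotheses (Ha1 : 0 < a1) (Ha2 : 0 < a2).

Let slice_int (f : R * R -> R) (x : R) : R :=
  RInt (fun t => f (x, t)) (- ell_bound a1 a2 x) (ell_bound a1 a2 x).

Lemma int_omega_ext f g : (forall z, in_omega a1 a2 z -> f z = g z) ->
  int_omega a1 a2 f = int_omega a1 a2 g.
Proof.
  intros Hfg. unfold int_omega. apply RInt_ext_R. intros x _. apply RInt_ext_R. intros t Ht.
  pose proof (ell_bound_nonneg a1 a2 Ha2 x).
  rewrite Rmin_left, Rmax_right in Ht by lra. apply Hfg, in_omega_ell_bound; assumption.
Qed.

Lemma continuous_slice_int f x : (forall z, continuous f z) -> continuous (slice_int f) x.
Proof.
  intros Hf. apply continuous_RInt_param; [exact Hf | apply cont_opp |];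
    apply continuous_ell_bound.
Qed.

Lemma int_omega_plus f g : (forall z, continuous f z) -> (forall z, continuous g z) ->
  int_omega a1 a2 (fun z => f z + g z) = int_omega a1 a2 f + int_omega a1 a2 g.
Proof.
  intros Hf Hg. unfold int_omega.
  rewrite <- RInt_plus_R by (apply ex_RInt_cont; intros; apply continuous_slice_int; assumption).
  apply RInt_ext_R. intros x _. apply RInt_plus_R; apply ex_RInt_slice2; assumption.
Qed.

Lemma int_omega_scal f c : (forall z, continuous f z) ->
  int_omega a1 a2 (fun z => c * f z) = c * int_omega a1 a2 f.
Proof.
  intros Hf. unfold int_omega.
  rewrite <- RInt_scal_R by (apply ex_RInt_cont; intros; apply continuous_slice_int, Hf).
  apply RInt_ext_R. intros x _. apply RInt_scal_R, ex_RInt_slice2, Hf.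
Qed.

Lemma int_omega_d2_eq0 (F G : R * R -> R) : (forall z, continuous F z) -> (forall z, continuous G z) ->
  (forall z, in_Gamma a1 a2 z -> F z = 0) ->
  (forall z, in_omega a1 a2 z -> is_derive (fun t => F (fst z, t)) (snd z) (G z)) ->
  int_omega a1 a2 G = 0.
Proof.
  intros HF HG HF0 HFG. unfold int_omega.
  rewrite (RInt_ext_R _ (fun _ => 0)), RInt_const; [unfold scal; simpl; unfold mult; simpl; ring |].
  intros x Hx. rewrite Rmin_left, Rmax_right in Hx by lra.
  pose proof (ell_bound_pos a1 a2 Ha1 Ha2 x Hx).
  rewrite (RInt_derive_open (fun t => F (x, t))); [| lra | intros; apply continuous_slice2, HF
    | intros; apply continuous_slice2, HG | intros t Ht; apply (HFG (x, t)), in_omega_ell_bound; assumption].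
  rewrite !HF0; [ring | |]; apply in_Gamma_ell_bound; try assumption; try lra; ring.
Qed.

(* The slice integral vanishes at [x = -a1] and [x = a1]; splitting it at [t = 0] and
   reflecting the lower half, the Leibniz rule computes its derivative. *)
Lemma int_omega_d1_eq0 (F G : R * R -> R) : (forall z, continuous F z) -> (forall z, continuous G z) ->
  (forall z, in_Gamma a1 a2 z -> F z = 0) ->
  (forall z, in_omega a1 a2 z -> is_derive (fun t => F (t, snd z)) (fst z) (G z)) ->
  int_omega a1 a2 G = 0.
Proof.
  intros HF HG HF0 HFG. unfold int_omega.
  rewrite (RInt_derive_open (slice_int F)); [| lra | intros; apply continuous_slice_int, HF
    | intros; apply continuous_slice_int, HG |].
  - unfold slice_int. rewrite !ell_bound_outside by lra. rewrite Ropp_0, !RInt_point_R. ring.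
  - intros x Hx.
    assert (Hrefl : forall H : R * R -> R, (forall z, continuous H z) ->
              forall z, continuous (fun y => H (fst y, - snd y)) z)
      by (intros H HH z; apply (continuous_comp (fun y : R * R => (fst y, - snd y))); [apply cont_pair; auto_cont | apply HH]).
    unfold slice_int. rewrite RInt_symmetric_split by (intros; apply continuous_slice2, HG).
    apply (is_derive_ext (fun x => RInt (fun t => F (x, t)) 0 (ell_bound a1 a2 x)
        + RInt (fun t => (fun y => F (fst y, - snd y)) (x, t)) 0 (ell_bound a1 a2 x))).
    { intros x'. rewrite RInt_symmetric_split by (intros; apply continuous_slice2, HF). reflexivity. }
    apply (is_derive_plus (fun x => RInt (fun t => F (x, t)) 0 (ell_bound a1 a2 x))
      (fun x => RInt (fun t => (fun y => F (fst y, - snd y)) (x, t)) 0 (ell_bound a1 a2 x))).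
    + apply is_derive_RInt_param_upper; try assumption.
      * intros s t Ht. apply (HFG (s, t)), (in_omega_ell_bound a1 a2 Ha1 Ha2). lra.
      * apply ell_bound_pos; assumption.
      * apply ex_derive_ell_bound; assumption.
      * apply HF0, (in_Gamma_ell_bound a1 a2 Ha1 Ha2); [lra | reflexivity].
      * intros; apply ell_bound_between; assumption.
    + apply (is_derive_RInt_param_upper (fun y => F (fst y, - snd y)) (fun y => G (fst y, - snd y)));
        try (apply Hrefl; assumption).
      * intros s t Ht. apply (HFG (s, - t)), (in_omega_ell_bound a1 a2 Ha1 Ha2). lra.
      * apply ell_bound_pos; assumption.
      * apply ex_derive_ell_bound; assumption.
      * apply HF0, (in_Gamma_ell_bound a1 a2 Ha1 Ha2); simpl; [lra | ring].
      * intros; apply ell_bound_between; assumption.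
Qed.

End IntegralOverEllipse.

(** * Integration by parts against theta *)

Definition dtheta1 (a1 : R) (y : R * R) : R := -2 * fst y / a1 ^ 2.
Definition dtheta2 (a2 : R) (y : R * R) : R := -2 * snd y / a2 ^ 2.
Definition dpbar1 (a1 a2 p0 : R) (y : R * R) : R := 2 * p0 * theta a1 a2 y * dtheta1 a1 y.
Definition dpbar2 (a1 a2 p0 : R) (y : R * R) : R := 2 * p0 * theta a1 a2 y * dtheta2 a2 y.
Definition dpbar11 (a1 a2 p0 : R) (y : R * R) : R :=
  2 * p0 * dtheta1 a1 y ^ 2 - 4 * p0 * theta a1 a2 y / a1 ^ 2.
Definition dpbar22 (a1 a2 p0 : R) (y : R * R) : R :=
  2 * p0 * dtheta2 a2 y ^ 2 - 4 * p0 * theta a1 a2 y / a2 ^ 2.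

Ltac unfold_pbar := unfold dpbar1, dpbar2, dpbar11, dpbar22, dtheta1, dtheta2, theta, ellq.

Section ExplicitDerivatives.
Variables a1 a2 p0 : R.
Hypotheses (Ha1 : 0 < a1) (Ha2 : 0 < a2).
Variable z : R * R.

Lemma is_derive_theta1 : is_derive (fun t => theta a1 a2 (t, snd z)) (fst z) (dtheta1 a1 z).
Proof. unfold theta, ellq, dtheta1; simpl. auto_derive; [auto | field; lra]. Qed.

Lemma is_derive_theta2 : is_derive (fun t => theta a1 a2 (fst z, t)) (snd z) (dtheta2 a2 z).
Proof. unfold theta, ellq, dtheta2; simpl. auto_derive; [auto | field; lra]. Qed.

Lemma is_derive_dtheta1 : is_derive (fun t => dtheta1 a1 (t, snd z)) (fst z) (-2 / a1 ^ 2).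
Proof. unfold dtheta1; simpl. auto_derive; [auto | field; lra]. Qed.

Lemma is_derive_dtheta2 : is_derive (fun t => dtheta2 a2 (fst z, t)) (snd z) (-2 / a2 ^ 2).
Proof. unfold dtheta2; simpl. auto_derive; [auto | field; lra]. Qed.

Lemma d1_pbar : Defs.d1 (pbar a1 a2 p0) z = dpbar1 a1 a2 p0 z.
Proof.
  apply is_derive_unique. unfold pbar, theta, ellq, dpbar1, dtheta1; simpl.
  auto_derive; [auto | unfold theta, ellq; field; lra].
Qed.

Lemma d2_pbar : Defs.d2 (pbar a1 a2 p0) z = dpbar2 a1 a2 p0 z.
Proof.
  apply is_derive_unique. unfold pbar, theta, ellq, dpbar2, dtheta2; simpl.
  auto_derive; [auto | unfold theta, ellq; field; lra].
Qed.

Lemma is_derive_dpbar1 : is_derive (fun t => dpbar1 a1 a2 p0 (t, snd z)) (fst z) (dpbar11 a1 a2 p0 z).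
Proof. unfold dpbar1, dpbar11, theta, ellq, dtheta1; simpl. auto_derive; [auto | field; lra]. Qed.

Lemma is_derive_dpbar2 : is_derive (fun t => dpbar2 a1 a2 p0 (fst z, t)) (snd z) (dpbar22 a1 a2 p0 z).
Proof. unfold dpbar2, dpbar22, theta, ellq, dtheta2; simpl. auto_derive; [auto | field; lra]. Qed.

End ExplicitDerivatives.

Lemma div_H_grad_pbar a1 a2 p0 H k1 k2 z : 0 < a1 -> 0 < a2 ->
  is_derive (fun t => H (t, snd z)) (fst z) (k1 z) ->
  is_derive (fun t => H (fst z, t)) (snd z) (k2 z) ->
  div_H_grad H (pbar a1 a2 p0) z =
    (k1 z * dpbar1 a1 a2 p0 z + H z * dpbar11 a1 a2 p0 z)
  + (k2 z * dpbar2 a1 a2 p0 z + H z * dpbar22 a1 a2 p0 z).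
Proof.
  intros Ha1 Ha2 Hk1 Hk2. destruct z as [y1 y2]. unfold div_H_grad, Defs.d1 at 1, Defs.d2 at 1. simpl in *.
  f_equal; apply is_derive_unique.
  - apply (is_derive_ext (fun t => H (t, y2) * dpbar1 a1 a2 p0 (t, y2))); [intros; rewrite d1_pbar; auto |].
    apply (is_derive_mult (fun t => H (t, y2)) (fun t => dpbar1 a1 a2 p0 (t, y2))); [exact Hk1 | | intros; apply Rmult_comm].
    exact (is_derive_dpbar1 a1 a2 p0 Ha1 Ha2 (y1, y2)).
  - apply (is_derive_ext (fun t => H (y1, t) * dpbar2 a1 a2 p0 (y1, t))); [intros; rewrite d2_pbar; auto |].
    apply (is_derive_mult (fun t => H (y1, t)) (fun t => dpbar2 a1 a2 p0 (y1, t))); [exact Hk2 | | intros; apply Rmult_comm].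
    exact (is_derive_dpbar2 a1 a2 p0 Ha1 Ha2 (y1, y2)).
Qed.

Section IntegrationByParts.
Variables a1 a2 : R.
Hypotheses (Ha1 : 0 < a1) (Ha2 : 0 < a2).
Variables u du w dw : R * R -> R.
Hypotheses (Hu : forall z, continuous u z) (Hdu : forall z, continuous du z)
  (Hw : forall z, continuous w z) (Hdw : forall z, continuous dw z).
Hypothesis Hwu : forall z, in_Gamma a1 a2 z -> w z * u z = 0.

Lemma int_omega_by_parts1 :
  (forall z, in_omega a1 a2 z -> is_derive (fun t => u (t, snd z)) (fst z) (du z)) ->
  (forall z, in_omega a1 a2 z -> is_derive (fun t => w (t, snd z)) (fst z) (dw z)) ->
  int_omega a1 a2 (fun z => w z * du z) = - int_omega a1 a2 (fun z => dw z * u z).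
Proof.
  intros Hdu1 Hdw1.
  assert (Hsum : int_omega a1 a2 (fun z => dw z * u z + w z * du z) = 0).
  { apply (int_omega_d1_eq0 a1 a2 Ha1 Ha2 (fun z => w z * u z)); try assumption; intros [z1 z2]; try auto_cont.
    intros Hz. apply (is_derive_mult (fun t => w (t, z2)) (fun t => u (t, z2)));
      [exact (Hdw1 _ Hz) | exact (Hdu1 _ Hz) | intros; apply Rmult_comm]. }
  rewrite int_omega_plus in Hsum by (intros; auto_cont). lra.
Qed.

Lemma int_omega_by_parts2 :
  (forall z, in_omega a1 a2 z -> is_derive (fun t => u (fst z, t)) (snd z) (du z)) ->
  (forall z, in_omega a1 a2 z -> is_derive (fun t => w (fst z, t)) (snd z) (dw z)) ->
  int_omega a1 a2 (fun z => w z * du z) = - int_omega a1 a2 (fun z => dw z * u z).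
Proof.
  intros Hdu2 Hdw2.
  assert (Hsum : int_omega a1 a2 (fun z => dw z * u z + w z * du z) = 0).
  { apply (int_omega_d2_eq0 a1 a2 Ha1 Ha2 (fun z => w z * u z)); try assumption; intros [z1 z2]; try auto_cont.
    intros Hz. apply (is_derive_mult (fun t => w (z1, t)) (fun t => u (z1, t)));
      [exact (Hdw2 _ Hz) | exact (Hdu2 _ Hz) | intros; apply Rmult_comm]. }
  rewrite int_omega_plus in Hsum by (intros; auto_cont). lra.
Qed.

End IntegrationByParts.

Section ThetaWeightedIntegrals.
Variables a1 a2 : R.
Hypotheses (Ha1 : 0 < a1) (Ha2 : 0 < a2).

Lemma theta_Gamma z : in_Gamma a1 a2 z -> theta a1 a2 z = 0.
Proof. unfold in_Gamma, theta. intros ->. ring. Qed.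

Lemma continuous_theta z : continuous (theta a1 a2) z.
Proof. unfold theta, ellq. auto_cont. Qed.

Lemma continuous_dtheta1 z : continuous (dtheta1 a1) z.
Proof. unfold dtheta1. auto_cont. Qed.

Lemma continuous_dtheta2 z : continuous (dtheta2 a2) z.
Proof. unfold dtheta2. auto_cont. Qed.

Variables p q r : R * R -> R.
Hypotheses (Hp : forall z, continuous p z) (Hq : forall z, continuous q z) (Hr : forall z, continuous r z).
Hypothesis Hp0 : forall z, in_Gamma a1 a2 z -> p z = 0.

(* Two integrations by parts against [theta]; [theta] vanishes on Gamma for the
   first, [p] for the second. *)
Lemma int_omega_theta_d11 :
  (forall z, in_omega a1 a2 z -> is_derive (fun t => p (t, snd z)) (fst z) (q z)) ->
  (forall z, in_omega a1 a2 z -> is_derive (fun t => q (t, snd z)) (fst z) (r z)) ->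
  int_omega a1 a2 (fun z => theta a1 a2 z * r z) = - (2 / a1 ^ 2) * int_omega a1 a2 p.
Proof.
  intros Hpq Hqr.
  rewrite (int_omega_by_parts1 a1 a2 Ha1 Ha2 q r (theta a1 a2) (dtheta1 a1)); try assumption;
    [| apply continuous_theta | apply continuous_dtheta1
     | intros z Hz; rewrite theta_Gamma by exact Hz; ring | intros z _; apply is_derive_theta1; assumption].
  rewrite (int_omega_by_parts1 a1 a2 Ha1 Ha2 p q (dtheta1 a1) (fun _ => -2 / a1 ^ 2)); try assumption;
    [| apply continuous_dtheta1 | intros; apply continuous_const
     | intros z Hz; rewrite Hp0 by exact Hz; ring | intros z _; apply is_derive_dtheta1, Ha1].
  rewrite int_omega_scal by exact Hp. lra.
Qed.

Lemma int_omega_theta_d22 :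
  (forall z, in_omega a1 a2 z -> is_derive (fun t => p (fst z, t)) (snd z) (q z)) ->
  (forall z, in_omega a1 a2 z -> is_derive (fun t => q (fst z, t)) (snd z) (r z)) ->
  int_omega a1 a2 (fun z => theta a1 a2 z * r z) = - (2 / a2 ^ 2) * int_omega a1 a2 p.
Proof.
  intros Hpq Hqr.
  rewrite (int_omega_by_parts2 a1 a2 Ha1 Ha2 q r (theta a1 a2) (dtheta2 a2)); try assumption;
    [| apply continuous_theta | apply continuous_dtheta2
     | intros z Hz; rewrite theta_Gamma by exact Hz; ring | intros z _; apply is_derive_theta2; assumption].
  rewrite (int_omega_by_parts2 a1 a2 Ha1 Ha2 p q (dtheta2 a2) (fun _ => -2 / a2 ^ 2)); try assumption;
    [| apply continuous_dtheta2 | intros; apply continuous_const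
     | intros z Hz; rewrite Hp0 by exact Hz; ring | intros z _; apply is_derive_dtheta2, Ha2].
  rewrite int_omega_scal by exact Hp. lra.
Qed.

End ThetaWeightedIntegrals.

Lemma lap_in_omega a1 a2 f g1 g2 h11 h12 h21 h22 z :
  partials_in_omega a1 a2 f g1 g2 -> partials_in_omega a1 a2 g1 h11 h12 ->
  partials_in_omega a1 a2 g2 h21 h22 -> in_omega a1 a2 z -> lap f z = h11 z + h22 z.
Proof.
  intros Hf Hg1 Hg2 Hz. unfold lap, Defs.d1, Defs.d2. f_equal; apply is_derive_unique.
  - apply (is_derive_ext_loc (fun t => g1 (t, snd z))); [| apply (Hg1 z Hz)].
    eapply filter_imp; [| exact (locally_omega_slice1 a1 a2 z Hz)]. intros t Ht.
    symmetry. apply is_derive_unique, (Hf (t, snd z) Ht).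
  - apply (is_derive_ext_loc (fun t => g2 (fst z, t))); [| apply (Hg2 z Hz)].
    eapply filter_imp; [| exact (locally_omega_slice2 a1 a2 z Hz)]. intros t Ht.
    symmetry. apply is_derive_unique, (Hf (fst z, t) Ht).
Qed.

Lemma int_omega_theta_lap a1 a2 f : 0 < a1 -> 0 < a2 -> C2_closure a1 a2 f ->
  (forall z, in_Gamma a1 a2 z -> f z = 0) ->
  int_omega a1 a2 (fun z => theta a1 a2 z * lap f z) = - (2 / a1 ^ 2 + 2 / a2 ^ 2) * int_omega a1 a2 f.
Proof.
  intros Ha1 Ha2 [Hf [g1 [g2 [Hfg [[Hg1 [h11 [h12 [Hgh1 [Hh11 Hh12]]]]] [Hg2 [h21 [h22 [Hgh2 [Hh21 Hh22]]]]]]]]]] Hf0.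
  set (E := ell_ext a1 a2).
  assert (HE : forall f, cont_on (in_closure a1 a2) f -> forall z, continuous (E f) z)
    by (intros; apply continuous_ell_ext; assumption).
  assert (HEf0 : forall z, in_Gamma a1 a2 z -> E f z = 0).
  { intros z Hz. unfold E. rewrite ell_ext_closure by (unfold in_closure; rewrite Hz; lra). apply Hf0, Hz. }
  assert (HEf : int_omega a1 a2 f = int_omega a1 a2 (E f))
    by (apply int_omega_ext; [assumption .. |]; intros z Hz; symmetry; apply ell_ext_closure, omega_closure, Hz).
  pose proof (partials_in_omega_ell_ext _ _ _ _ _ Hfg) as HEfg.
  pose proof (partials_in_omega_ell_ext _ _ _ _ _ Hgh1) as HEgh1.
  pose proof (partials_in_omega_ell_ext _ _ _ _ _ Hgh2) as HEgh2.
  rewrite (int_omega_ext a1 a2 Ha1 Ha2 _ (fun z => theta a1 a2 z * E h11 z + theta a1 a2 z * E h22 z)).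
  - rewrite int_omega_plus by (intros; auto_cont; apply continuous_theta || apply HE; assumption).
    rewrite (int_omega_theta_d11 a1 a2 Ha1 Ha2 (E f) (E g1) (E h11) (HE f Hf) (HE g1 Hg1) (HE h11 Hh11)
               HEf0 (fun z Hz => proj1 (HEfg z Hz)) (fun z Hz => proj1 (HEgh1 z Hz))),
      (int_omega_theta_d22 a1 a2 Ha1 Ha2 (E f) (E g2) (E h22) (HE f Hf) (HE g2 Hg2) (HE h22 Hh22)
               HEf0 (fun z Hz => proj2 (HEfg z Hz)) (fun z Hz => proj2 (HEgh2 z Hz))), HEf.
    ring.
  - intros z Hz. rewrite (lap_in_omega a1 a2 f g1 g2 h11 h12 h21 h22) by assumption.
    unfold E. rewrite !ell_ext_closure by (apply omega_closure, Hz). ring.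
Qed.

Lemma div_H_grad_pbar_ell_ext a1 a2 p0 H k1 k2 z : 0 < a1 -> 0 < a2 ->
  partials_in_omega a1 a2 H k1 k2 -> in_omega a1 a2 z ->
  div_H_grad H (pbar a1 a2 p0) z =
    (ell_ext a1 a2 k1 z * dpbar1 a1 a2 p0 z + ell_ext a1 a2 H z * dpbar11 a1 a2 p0 z)
  + (ell_ext a1 a2 k2 z * dpbar2 a1 a2 p0 z + ell_ext a1 a2 H z * dpbar22 a1 a2 p0 z).
Proof.
  intros Ha1 Ha2 Hk Hz. rewrite !ell_ext_closure by (apply omega_closure, Hz).
  apply div_H_grad_pbar; [assumption | assumption | apply Hk, Hz | apply Hk, Hz].
Qed.

Lemma int_omega_theta_div a1 a2 p0 H : 0 < a1 -> 0 < a2 -> C1_closure a1 a2 H ->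
  int_omega a1 a2 (fun z => theta a1 a2 z * div_H_grad H (pbar a1 a2 p0) z)
  = - (8 * p0 / (a1 * a2)) * int_omega a1 a2 (fun z => H z * rho a1 a2 z).
Proof.
  intros Ha1 Ha2 [HH [k1 [k2 [Hk [Hk1 Hk2]]]]].
  pose proof (continuous_ell_ext a1 a2 H Ha1 Ha2 HH) as HEH.
  pose proof (continuous_ell_ext a1 a2 k1 Ha1 Ha2 Hk1) as HEk1.
  pose proof (continuous_ell_ext a1 a2 k2 Ha1 Ha2 Hk2) as HEk2.
  pose proof (partials_in_omega_ell_ext _ _ _ _ _ Hk) as HEk.
  assert (IBP1 : int_omega a1 a2 (fun z => theta a1 a2 z
        * (ell_ext a1 a2 k1 z * dpbar1 a1 a2 p0 z + ell_ext a1 a2 H z * dpbar11 a1 a2 p0 z))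
      = - int_omega a1 a2 (fun z => dtheta1 a1 z * (ell_ext a1 a2 H z * dpbar1 a1 a2 p0 z))).
  { apply (int_omega_by_parts1 a1 a2 Ha1 Ha2 (fun z => ell_ext a1 a2 H z * dpbar1 a1 a2 p0 z));
      try (intros; unfold_pbar; auto_cont; fail).
    - intros z Hz. rewrite theta_Gamma by exact Hz. ring.
    - intros [z1 z2] Hz. apply (is_derive_mult (fun t => ell_ext a1 a2 H (t, z2)) (fun t => dpbar1 a1 a2 p0 (t, z2)));
        [apply HEk, Hz | apply (is_derive_dpbar1 a1 a2 p0 Ha1 Ha2 (z1, z2)) | intros; apply Rmult_comm].
    - intros z _. apply is_derive_theta1; assumption. }
  assert (IBP2 : int_omega a1 a2 (fun z => theta a1 a2 z
        * (ell_ext a1 a2 k2 z * dpbar2 a1 a2 p0 z + ell_ext a1 a2 H z * dpbar22 a1 a2 p0 z))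
      = - int_omega a1 a2 (fun z => dtheta2 a2 z * (ell_ext a1 a2 H z * dpbar2 a1 a2 p0 z))).
  { apply (int_omega_by_parts2 a1 a2 Ha1 Ha2 (fun z => ell_ext a1 a2 H z * dpbar2 a1 a2 p0 z));
      try (intros; unfold_pbar; auto_cont; fail).
    - intros z Hz. rewrite theta_Gamma by exact Hz. ring.
    - intros [z1 z2] Hz. apply (is_derive_mult (fun t => ell_ext a1 a2 H (z1, t)) (fun t => dpbar2 a1 a2 p0 (z1, t)));
        [apply HEk, Hz | apply (is_derive_dpbar2 a1 a2 p0 Ha1 Ha2 (z1, z2)) | intros; apply Rmult_comm].
    - intros z _. apply is_derive_theta2; assumption. }
  assert (Hrho : int_omega a1 a2 (fun z => dtheta1 a1 z * (ell_ext a1 a2 H z * dpbar1 a1 a2 p0 z)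
                  + dtheta2 a2 z * (ell_ext a1 a2 H z * dpbar2 a1 a2 p0 z))
               = int_omega a1 a2 (fun z => 8 * p0 / (a1 * a2) * (ell_ext a1 a2 H z * rho a1 a2 z))).
  { apply int_omega_ext; [assumption .. |]. intros z _. unfold rho; cbv zeta; unfold_pbar. field. lra. }
  rewrite int_omega_plus, int_omega_scal in Hrho by (intros; unfold rho; cbv zeta; unfold_pbar; auto_cont; lra).
  rewrite (int_omega_ext a1 a2 Ha1 Ha2 (fun z => H z * rho a1 a2 z) (fun z => ell_ext a1 a2 H z * rho a1 a2 z))
    by (intros; rewrite ell_ext_closure by (apply omega_closure; assumption); reflexivity).
  rewrite (int_omega_ext a1 a2 Ha1 Ha2 _ (fun z =>
      theta a1 a2 z * (ell_ext a1 a2 k1 z * dpbar1 a1 a2 p0 z + ell_ext a1 a2 H z * dpbar11 a1 a2 p0 z)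
    + theta a1 a2 z * (ell_ext a1 a2 k2 z * dpbar2 a1 a2 p0 z + ell_ext a1 a2 H z * dpbar22 a1 a2 p0 z)))
    by (intros z Hz; rewrite (div_H_grad_pbar_ell_ext a1 a2 p0 H k1 k2) by assumption; ring).
  rewrite int_omega_plus, IBP1, IBP2 by (intros; unfold_pbar; auto_cont).
  lra.
Qed.

Definition continuous_rep_omega (a1 a2 : R) (f : R * R -> R) : Prop :=
  exists g, (forall z, continuous g z) /\ forall z, in_omega a1 a2 z -> f z = g z.

Lemma int_omega_lin_comb a1 a2 f g c d : 0 < a1 -> 0 < a2 ->
  continuous_rep_omega a1 a2 f -> continuous_rep_omega a1 a2 g ->
  int_omega a1 a2 (fun z => c * f z + d * g z) = c * int_omega a1 a2 f + d * int_omega a1 a2 g.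
Proof.
  intros Ha1 Ha2 [f' [Hf' Hff']] [g' [Hg' Hgg']].
  rewrite (int_omega_ext a1 a2 Ha1 Ha2 f f'), (int_omega_ext a1 a2 Ha1 Ha2 g g'),
    (int_omega_ext a1 a2 Ha1 Ha2 _ (fun z => c * f' z + d * g' z))
    by (try intros z Hz; rewrite ?Hff', ?Hgg' by exact Hz; reflexivity).
  rewrite int_omega_plus, !int_omega_scal by (intros; auto_cont). reflexivity.
Qed.

Lemma continuous_rep_theta_div a1 a2 p0 H : 0 < a1 -> 0 < a2 -> C1_closure a1 a2 H ->
  continuous_rep_omega a1 a2 (fun z => theta a1 a2 z * div_H_grad H (pbar a1 a2 p0) z).
Proof.
  intros Ha1 Ha2 [HH [k1 [k2 [Hk [Hk1 Hk2]]]]].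
  pose proof (continuous_ell_ext a1 a2 H Ha1 Ha2 HH) as HEH.
  pose proof (continuous_ell_ext a1 a2 k1 Ha1 Ha2 Hk1) as HEk1.
  pose proof (continuous_ell_ext a1 a2 k2 Ha1 Ha2 Hk2) as HEk2.
  eexists. split; [| intros z Hz; rewrite (div_H_grad_pbar_ell_ext a1 a2 p0 H k1 k2) by assumption; reflexivity].
  intros z. unfold_pbar. auto_cont.
Qed.

Lemma eq0_iff_of_scaled_eq a b x y : a <> 0 -> b <> 0 -> a * x = b * y -> (x = 0 <-> y = 0).
Proof.
  intros Ha Hb Hxy. split; intros H0; rewrite H0, Rmult_0_r in Hxy.
  - destruct (Rmult_integral _ _ (eq_sym Hxy)); [contradiction | assumption].
  - destruct (Rmult_integral _ _ Hxy); [contradiction | assumption].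
Qed.

Theorem mainTheorem1 :
  forall (a1 a2 p0 m h1 h2 E1 E2 : R) (H1 H2 pt : R * R -> R),
    0 < a1 -> 0 < a2 -> 0 < p0 -> 0 < m ->
    0 < h1 -> 0 < h2 -> 0 < E1 -> 0 < E2 ->
    C1_closure a1 a2 H1 -> C1_closure a1 a2 H2 ->
    C2_closure a1 a2 pt ->
    (forall y, in_omega a1 a2 y ->
       - / m * lap pt y =
         3 * h1 ^ 2 / E1 * div_H_grad H1 (pbar a1 a2 p0) y
       + 3 * h2 ^ 2 / E2 * div_H_grad H2 (pbar a1 a2 p0) y) ->
    (forall y, in_Gamma a1 a2 y -> pt y = 0) ->
    (int_omega a1 a2 pt = 0 <->
       h1 ^ 2 / E1 * int_omega a1 a2 (fun y => H1 y * rho a1 a2 y)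
     + h2 ^ 2 / E2 * int_omega a1 a2 (fun y => H2 y * rho a1 a2 y) = 0).
Proof.
  intros a1 a2 p0 m h1 h2 E1 E2 H1 H2 pt Ha1 Ha2 Hp0 Hm Hh1 Hh2 HE1 HE2 HC1 HC2 HCpt Hpde Hbd.
  set (c1 := 3 * h1 ^ 2 / E1). set (c2 := 3 * h2 ^ 2 / E2).
  set (div1 := fun z => theta a1 a2 z * div_H_grad H1 (pbar a1 a2 p0) z).
  set (div2 := fun z => theta a1 a2 z * div_H_grad H2 (pbar a1 a2 p0) z).
  assert (Hweak : int_omega a1 a2 (fun z => theta a1 a2 z * lap pt z)
                  = - m * c1 * int_omega a1 a2 div1 + - m * c2 * int_omega a1 a2 div2).
  { rewrite <- int_omega_lin_comb by (try apply continuous_rep_theta_div; assumption).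
    apply int_omega_ext; [assumption .. |]. intros z Hz. unfold div1, div2.
    replace (lap pt z) with (- m * (- / m * lap pt z)) by (field; lra).
    rewrite Hpde by exact Hz. unfold c1, c2. ring. }
  rewrite int_omega_theta_lap in Hweak by assumption.
  unfold div1, div2 in Hweak. rewrite !int_omega_theta_div in Hweak by assumption.
  assert (0 < 2 / a1 ^ 2) by (apply Rdiv_lt_0_compat; [lra | apply pow_lt, Ha1]).
  assert (0 < 2 / a2 ^ 2) by (apply Rdiv_lt_0_compat; [lra | apply pow_lt, Ha2]).
  apply (eq0_iff_of_scaled_eq (- (2 / a1 ^ 2 + 2 / a2 ^ 2)) (24 * m * p0 / (a1 * a2)));
    [lra | apply Rgt_not_eq, Rdiv_lt_0_compat; nra | rewrite Hweak; unfold c1, c2; field; lra].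
Qed.
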